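(* In the While-language extended with non-deterministic input, for all commands $c_1,c_2$ and store $\sigma$: if $(c_1;c_2,\sigma)\to^\infty$ and there is no store $\sigma'$ with $(c_1,\sigma)\to^*(\mathsf{skip},\sigma')$, then $(c_1,\sigma)\to^\infty$.
   Context: Extended While-language syntax: variables $x$ range over a countably infinite set $\mathit{Var}$; $n$ ranges over natural numbers; values are $v ::= \mathsf{null}\mid n$ ($\mathsf{null}$ distinct from every natural number); expressions are $e ::= v\mid x\mid e_1\oplus e_2\mid\mathsf{input}$ with $\oplus\in\{+,-,*\}$, where $\oplus(n_1,n_2)$ is the result of the operation on naturals; commands are $c ::= \mathsf{skip}\mid\mathsf{alloc}\ x\mid x:=e\mid c_1;c_2\mid \mathsf{if}\ e\ c_1\ c_2\mid\mathsf{while}\ e\ c$. A store $\sigma$ is a finite partial map from $\mathit{Var}$ to values, with domain $\mathrm{dom}(\sigma)$, lookup $\sigma(x)$, update $\sigma[x\mapsto v]$. Expression evaluation $(e,\sigma)\Rightarrow_E v$ is the least relation with: $(v,\sigma)\Rightarrow_E v$; $(x,\sigma)\Rightarrow_E\sigma(x)$ if $x\in\mathrm{dom}(\sigma)$; if $(e_1,\sigma)\Rightarrow_E n_1$ and $(e_2,\sigma)\Rightarrow_E n_2$ with $n_1,n_2$ naturals then $(e_1\oplus e_2,\sigma)\Rightarrow_E\oplus(n_1,n_2)$; and $(\mathsf{input},\sigma)\Rightarrow_E v$ for every value $v$ (non-deterministic input). Small-step relation $(c,\sigma)\to(c',\sigma')$ is the least relation with: $(\mathsf{alloc}\ x,\sigma)\to(\mathsf{skip},\sigma[x\mapsto\mathsf{null}])$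 if $x\notin\mathrm{dom}(\sigma)$; $(x:=e,\sigma)\to(\mathsf{skip},\sigma[x\mapsto v])$ if $x\in\mathrm{dom}(\sigma)$ and $(e,\sigma)\Rightarrow_E v$; $(c_1;c_2,\sigma)\to(c_1';c_2,\sigma')$ if $(c_1,\sigma)\to(c_1',\sigma')$; $(\mathsf{skip};c_2,\sigma)\to(c_2,\sigma)$; $(\mathsf{if}\ e\ c_1\ c_2,\sigma)\to(c_1,\sigma)$ if $(e,\sigma)\Rightarrow_E v$, $v\neq 0$; $(\mathsf{if}\ e\ c_1\ c_2,\sigma)\to(c_2,\sigma)$ if $(e,\sigma)\Rightarrow_E 0$; $(\mathsf{while}\ e\ c,\sigma)\to(c;\mathsf{while}\ e\ c,\sigma)$ if $(e,\sigma)\Rightarrow_E v$, $v\neq0$; $(\mathsf{while}\ e\ c,\sigma)\to(\mathsf{skip},\sigma)$ if $(e,\sigma)\Rightarrow_E 0$. $\to^*$ is its reflexive-transitive closure. The predicate $(c,\sigma)\to^\infty$ is coinductively defined (greatest predicate) by: if $(c,\sigma)\to(c',\sigma')$ and $(c',\sigma')\to^\infty$ then $(c,\sigma)\to^\infty$. *)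

From Stdlib Require Import List PeanoNat.
Import ListNotations.

Definition var := nat.

Inductive value : Type := Vnull : value | Vnat : nat -> value.

Inductive binop : Type := Oplus | Ominus | Omult.

(* Operations on naturals; subtraction is truncated natural subtraction. *)
Definition binop_sem (o : binop) (n1 n2 : nat) : nat :=
  match o with Oplus => n1 + n2 | Ominus => n1 - n2 | Omult => n1 * n2 end.

Inductive expr : Type :=
| Eval : value -> expr
| Evar : var -> expr
| Ebin : binop -> expr -> expr -> expr
| Einput : expr.

Inductive com : Type :=
| Cskip : com
| Calloc : var -> com
| Cassign : var -> expr -> com
| Cseq : com -> com -> com
| Cif : expr -> com -> com -> com
| Cwhile : expr -> com -> com.

Definition store : Type :=
  { s : var -> option value | exists l : list var, forall x, s x <> None -> In x l }.

Definition lookup (s : store) (x : var) : option value := proj1_sig s x.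
Definition in_dom (s : store) (x : var) : Prop := lookup s x <> None.

Definition update_fun (f : var -> option value) (x : var) (v : value) :=
  fun y => if Nat.eqb y x then Some v else f y.

Lemma update_finite (s : store) (x : var) (v : value) :
  exists l : list var, forall y, update_fun (proj1_sig s) x v y <> None -> In y l.
Proof.
  destruct s as [f [l Hl]]; simpl. exists (x :: l). intros y Hy.
  unfold update_fun in Hy. destruct (Nat.eqb_spec y x).
  - left; auto.
  - right; apply Hl; exact Hy.
Qed.

Definition update (s : store) (x : var) (v : value) : store :=
  exist _ (update_fun (proj1_sig s) x v) (update_finite s x v).

Inductive eval_expr : expr -> store -> value -> Prop :=
| EE_val : forall v s, eval_expr (Eval v) s v
| EE_var : forall x s v, lookup s x = Some v -> eval_expr (Evar x) s v
| EE_bin : forall o e1 e2 s n1 n2,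
    eval_expr e1 s (Vnat n1) -> eval_expr e2 s (Vnat n2) ->
    eval_expr (Ebin o e1 e2) s (Vnat (binop_sem o n1 n2))
| EE_input : forall s v, eval_expr Einput s v.

Inductive step : com -> store -> com -> store -> Prop :=
| S_alloc : forall x s, ~ in_dom s x -> step (Calloc x) s Cskip (update s x Vnull)
| S_assign : forall x e s v, in_dom s x -> eval_expr e s v ->
    step (Cassign x e) s Cskip (update s x v)
| S_seq : forall c1 c1' c2 s s', step c1 s c1' s' -> step (Cseq c1 c2) s (Cseq c1' c2) s'
| S_seqskip : forall c2 s, step (Cseq Cskip c2) s c2 s
| S_iftrue : forall e c1 c2 s v, eval_expr e s v -> v <> Vnat 0 -> step (Cif e c1 c2) s c1 s
| S_iffalse : forall e c1 c2 s, eval_expr e s (Vnat 0) -> step (Cif e c1 c2) s c2 s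
| S_whiletrue : forall e c s v, eval_expr e s v -> v <> Vnat 0 ->
    step (Cwhile e c) s (Cseq c (Cwhile e c)) s
| S_whilefalse : forall e c s, eval_expr e s (Vnat 0) -> step (Cwhile e c) s Cskip s.

Inductive steps : com -> store -> com -> store -> Prop :=
| steps_refl : forall c s, steps c s c s
| steps_trans : forall c s c' s' c'' s'', step c s c' s' -> steps c' s' c'' s'' -> steps c s c'' s''.

CoInductive diverges : com -> store -> Prop :=
| div_step : forall c s c' s', step c s c' s' -> diverges c' s' -> diverges c s.


(* Divergence of [c1; c2] either stays inside [c1] forever, or [c1] reaches
   [skip]; excluding the latter, peel off the steps of [c1] coinductively. *)

Definition terminates (c : com) (s : store) : Prop :=
  exists s' : store, steps c s Cskip s'.

Lemma step_seq_inv {c1 c2 c' : com} {s s' : store} :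
  step (Cseq c1 c2) s c' s' ->
  (exists c1', step c1 s c1' s' /\ c' = Cseq c1' c2)
  \/ (c1 = Cskip /\ c' = c2 /\ s' = s).
Proof.
  intros Hstep. inversion Hstep; subst.
  - left. eexists. split; [eassumption | reflexivity].
  - right. auto.
Qed.

Lemma terminates_step {c c' : com} {s s' : store} :
  step c s c' s' -> terminates c' s' -> terminates c s.
Proof.
  intros Hstep [s'' Hsteps]. exists s''. eapply steps_trans; eassumption.
Qed.

Theorem lemma25 : forall (c1 c2 : com) (s : store),
  diverges (Cseq c1 c2) s ->
  ~ (exists s' : store, steps c1 s Cskip s') ->
  diverges c1 s.
Proof.
  cofix CIH. intros c1 c2 s Hdiv Hnterm.
  inversion Hdiv as [? ? c' s' Hstep Hdiv']; subst.
  destruct (step_seq_inv Hstep) as [[c1' [Hstep1 ->]] | [-> _]].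
  - apply div_step with c1' s'; [exact Hstep1 |].
    apply (CIH c1' c2 s' Hdiv').
    intros Hterm'. exact (Hnterm (terminates_step Hstep1 Hterm')).
  - exfalso. apply Hnterm. exists s. constructor.
Qed.
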